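(* Assume hypothesis (H), extend $g$ to a bounded $C^1$ function on $\mathbb{R}$, and assume $g'(K)\,h\,e^{h+1}<-1$. Then for all sufficiently small $\varepsilon>0$, every non-constant bounded solution $x:\mathbb{R}\to\mathbb{R}$ of $$\varepsilon^2x''(t)-x'(t)-x(t)+g(x(t-h))=0,\qquad t\in\mathbb{R},$$ with $x(+\infty)=K$ oscillates about $K$, i.e. for every $z\in\mathbb{R}$ the function $x-K$ takes both positive and negative values on $[z,+\infty)$.
   Context: Hypothesis (H): for $h>0$ and $g:\mathbb{R}_+\to\mathbb{R}_+$, the equation $u'(t)=-u(t)+g(u(t-h))$, $u\ge0$, has exactly two constant solutions $0$ and $K>0$; $K$ is exponentially asymptotically stable and $0$ is hyperbolic; $g\in C^1(\mathbb{R}_+,\mathbb{R}_+)$, $g$ is $C^2$ near $0$ and near $K$, and $p:=g'(0)>1$. *)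

From Stdlib Require Import Reals.
From Coquelicot Require Import Coquelicot.
Open Scope R_scope.

Definition C1_R (f : R -> R) : Prop :=
  forall x, ex_derive f x /\ continuous (Derive f) x.

Definition C2_on_ball (f : R -> R) (a d : R) : Prop :=
  forall x, a - d < x < a + d ->
    ex_derive f x /\ ex_derive (Derive f) x /\ continuous (Derive_n f 2) x.

Definition C2_near_0_on_Rplus (g : R -> R) : Prop :=
  exists d, 0 < d /\ exists G : R -> R,
    C2_on_ball G 0 d /\ (forall x, 0 <= x < d -> G x = g x).

Definition C2_near (g : R -> R) (a : R) : Prop :=
  exists d, 0 < d /\ C2_on_ball g a d.

(* u is a solution on [0, +oo) of u'(t) = -u(t) + g(u(t-h)) with continuous
   history on [-h, 0] (values of u before -h are irrelevant; requiring global
   continuity loses nothing since any continuous history extends). *)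
Definition dde_solution (g : R -> R) (h : R) (u : R -> R) : Prop :=
  (forall t, continuous u t) /\
  (forall t, 0 < t -> is_derive u t (- u t + g (u (t - h)))).

Definition exp_asympt_stable (g : R -> R) (h K : R) : Prop :=
  exists delta M gamma, 0 < delta /\ 0 < M /\ 0 < gamma /\
    forall u, dde_solution g h u ->
    forall r, 0 <= r < delta ->
      (forall s, -h <= s <= 0 -> Rabs (u s - K) <= r) ->
      forall t, 0 <= t -> Rabs (u t - K) <= M * exp (- gamma * t) * r.

(* The equilibrium 0 is hyperbolic: the characteristic equation
   lambda = -1 + g'(0) e^{-lambda h} has no purely imaginary root i*w
   (real and imaginary parts written out). *)
Definition hyperbolic_at_0 (g : R -> R) (h : R) : Prop :=
  ~ exists w : R,
      -1 + Derive g 0 * cos (w * h) = 0 /\ w = - (Derive g 0) * sin (w * h).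

Definition hyp_H (g : R -> R) (h K : R) : Prop :=
  0 < h /\ 0 < K /\
  (forall u, 0 <= u -> 0 <= g u) /\
  (forall u, 0 <= u -> (g u = u <-> (u = 0 \/ u = K))) /\
  exp_asympt_stable g h K /\
  hyperbolic_at_0 g h /\
  C1_R g /\
  C2_near_0_on_Rplus g /\ C2_near g K /\
  1 < Derive g 0.

Definition sp_solution (g : R -> R) (h eps : R) (x : R -> R) : Prop :=
  forall t, ex_derive x t /\ ex_derive (Derive x) t /\
    eps ^ 2 * Derive_n x 2 t - Derive x t - x t + g (x (t - h)) = 0.

From Stdlib Require Import Reals Lra Classical.
From Coquelicot Require Import Coquelicot.
Open Scope R_scope.

(* If [x - K] kept one sign on a half-line, [y = +-(x - K)] would be bounded,
   eventually nonnegative, and satisfy [e y'' - y' - y >= A y(t - h)] with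
   [e = eps^2] and [A] slightly below [- g'(K)], since [x(t) -> K].  Factoring
   [e l^2 - l - 1 = e (l - lp) (l - lm)], boundedness forces [u = y' - lm y <= 0],
   so [y] decreases; it stays positive because backward uniqueness rules out
   [x = K] near [+oo].  Integrating [u' - lp u] over short windows turns this into
   the delay inequality [v' <= - p v(t - r)] for [v = exp(-lm t) y], with
   [e p r > 1] for small [eps] because [g'(K) h exp(h + 1) < -1].  Such an
   inequality has no positive solution: the ratio [v(t - r) / v(t)] would grow
   geometrically, while a half-delay estimate keeps it bounded. *)

Lemma nonincreasing_of_derive_nonpos (f df : R -> R) a b : a <= b ->
  (forall t, a <= t <= b -> is_derive f t (df t)) ->
  (forall t, a <= t <= b -> df t <= 0) -> f b <= f a.
Proof.
  intros Hab Hd Hneg.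
  destruct (MVT_gen f a b df) as [c [Hc Hmvt]];
    rewrite ?Rmin_left, ?Rmax_right in * by lra.
  - intros t Ht; apply Hd; lra.
  - intros t Ht; apply continuity_pt_filterlim, (ex_derive_continuous (V := R_NormedModule)).
    exists (df t); apply Hd; lra.
  - assert (df c <= 0) by (apply Hneg; lra). nra.
Qed.

Lemma is_derive_Rplus (f g : R -> R) x a b : is_derive f x a -> is_derive g x b ->
  is_derive (fun y => f y + g y) x (a + b).
Proof. intros; now apply (is_derive_plus f g). Qed.

Lemma is_derive_Rminus (f g : R -> R) x a b : is_derive f x a -> is_derive g x b ->
  is_derive (fun y => f y - g y) x (a - b).
Proof. intros; now apply (is_derive_minus f g). Qed.

Lemma is_derive_Rscal (f : R -> R) c x a : is_derive f x a ->
  is_derive (fun y => c * f y) x (c * a).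
Proof. intros; now apply (is_derive_scal f). Qed.

Lemma is_derive_exp_scal c x : is_derive (fun s => exp (c * s)) x (c * exp (c * x)).
Proof. auto_derive; auto; ring. Qed.

Lemma nondecreasing_of_derive_nonneg (f df : R -> R) a b : a <= b ->
  (forall t, a <= t <= b -> is_derive f t (df t)) ->
  (forall t, a <= t <= b -> 0 <= df t) -> f a <= f b.
Proof.
  intros Hab Hd Hpos.
  enough (- f b <= - f a) by lra.
  apply (nonincreasing_of_derive_nonpos (fun t => - f t) (fun t => - df t)); auto.
  - intros t Ht. apply (is_derive_opp f). now apply Hd.
  - intros t Ht. specialize (Hpos t Ht). lra.
Qed.

Lemma exp_le_exp x y : x <= y -> exp x <= exp y.
Proof. intros [Hlt | <-]; [left; now apply exp_increasing | lra]. Qed.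

Lemma e_mul_le_exp x : exp 1 * x <= exp x.
Proof.
  replace (exp x) with (exp 1 * exp (x - 1)) by (rewrite <- exp_plus; f_equal; ring).
  pose proof (exp_ineq1_le (x - 1)). pose proof (exp_pos 1). nra.
Qed.

Lemma bernoulli_ineq x n : -1 <= x -> 1 + INR n * x <= (1 + x) ^ n.
Proof.
  intros Hx. induction n as [|n IH]; [simpl; lra|].
  rewrite S_INR; simpl. pose proof (pos_INR n).
  assert (0 <= INR n * (x * x)) by (apply Rmult_le_pos; nra).
  assert ((1 + x) * (1 + INR n * x) <= (1 + x) * (1 + x) ^ n)
    by (apply Rmult_le_compat_l; lra).
  nra.
Qed.

Section DelayInequality.

Variables (v dv : R -> R) (p r T : R).
Hypothesis r_pos : 0 < r.
Hypothesis p_pos : 0 < p.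
Hypothesis critical_gain : 1 < exp 1 * p * r.
Hypothesis v_derive : forall s, T - r <= s -> is_derive v s (dv s).
Hypothesis v_pos : forall s, T - r <= s -> 0 < v s.
Hypothesis dv_nonpos : forall s, T - r <= s -> dv s <= 0.
Hypothesis dv_delay : forall t, T <= t -> dv t <= - p * v (t - r).

Lemma delay_v_nonincr a b : T - r <= a -> a <= b -> v b <= v a.
Proof.
  intros Ha Hab. apply (nonincreasing_of_derive_nonpos v dv a b Hab).
  - intros t Ht; apply v_derive; lra.
  - intros t Ht; apply dv_nonpos; lra.
Qed.

Lemma delay_v_half_step t : T + r / 2 <= t -> p * (r / 2) * v (t - r) <= v (t - r / 2).
Proof.
  intros Ht.
  assert (Hlin : v t + p * v (t - r) * t <= v (t - r / 2) + p * v (t - r) * (t - r / 2)).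
  { apply (nonincreasing_of_derive_nonpos (fun s => v s + p * v (t - r) * s)
             (fun s => dv s + p * v (t - r))); [lra| |].
    - intros s Hs. apply is_derive_Rplus; [apply v_derive; lra|].
      auto_derive; auto; ring.
    - intros s Hs. pose proof (dv_delay s ltac:(lra)).
      pose proof (delay_v_nonincr (s - r) (t - r) ltac:(lra) ltac:(lra)). nra. }
  pose proof (v_pos t ltac:(lra)). nra.
Qed.

Lemma delay_v_ratio_lower t : T + r / 2 <= t -> (p * (r / 2)) ^ 2 * v (t - r) <= v t.
Proof.
  intros Ht.
  pose proof (delay_v_half_step t Ht) as H1.
  pose proof (delay_v_half_step (t + r / 2) ltac:(lra)) as H2.
  replace (t + r / 2 - r) with (t - r / 2) in H2 by field.
  replace (t + r / 2 - r / 2) with t in H2 by field.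
  assert (0 < p * (r / 2)) by (apply Rmult_lt_0_compat; lra).
  simpl. nra.
Qed.

(* If [v(s - r) >= c v(s)] on [[t - r, t]], then [v' <= - p c v] there, so [v] decays
   at least like [exp(- p c r)] over one delay, and [exp(p c r) >= e p r c]. *)
Lemma delay_v_ratio_upper n t :
  T + INR n * r <= t -> (exp 1 * p * r) ^ n * v t <= v (t - r).
Proof.
  revert t; induction n as [|n IH]; intros t Ht.
  - simpl in *. rewrite Rmult_1_l. apply delay_v_nonincr; lra.
  - rewrite S_INR in Ht. pose proof (pos_INR n).
    assert (Hnr : 0 <= INR n * r) by (apply Rmult_le_pos; lra).
    set (c := (exp 1 * p * r) ^ n) in *.
    assert (Hc : 0 < c) by (apply pow_lt; lra).
    assert (Hdecay : v t * exp (p * c * t) <= v (t - r) * exp (p * c * (t - r))).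
    { apply (nonincreasing_of_derive_nonpos (fun s => v s * exp (p * c * s))
        (fun s => (dv s + p * c * v s) * exp (p * c * s))); [lra| |].
      - intros s Hs.
        replace ((dv s + p * c * v s) * exp (p * c * s))
          with (dv s * exp (p * c * s) + v s * (p * c * exp (p * c * s))) by ring.
        apply (Derive.is_derive_mult v (fun s => exp (p * c * s)));
          [apply v_derive; lra | apply is_derive_exp_scal].
      - intros s Hs. pose proof (IH s ltac:(lra)).
        pose proof (dv_delay s ltac:(lra)). pose proof (exp_pos (p * c * s)).
        assert (p * (c * v s) <= p * v (s - r)) by (apply Rmult_le_compat_l; lra).
        nra. }
    replace (exp (p * c * t)) with (exp (p * c * (t - r)) * exp (p * c * r)) in Hdecay
      by (rewrite <- exp_plus; f_equal; ring).
    pose proof (exp_pos (p * c * (t - r))).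
    assert (Hstep : v t * exp (p * c * r) <= v (t - r))
      by (apply (Rmult_le_reg_r (exp (p * c * (t - r)))); lra).
    pose proof (e_mul_le_exp (p * c * r)).
    pose proof (v_pos t ltac:(lra)).
    simpl; fold c. nra.
Qed.

Lemma delay_inequality_no_positive_solution : False.
Proof.
  set (m := p * (r / 2)).
  assert (Hm : 0 < m) by (apply Rmult_lt_0_compat; lra).
  destruct (Pow_x_infinity (exp 1 * p * r) ltac:(rewrite Rabs_right; lra) (2 / m ^ 2))
    as [N HN].
  specialize (HN N (le_n N)). rewrite Rabs_right in HN by (apply Rle_ge, pow_le; lra).
  set (t := T + INR N * r + r).
  pose proof (pos_INR N).
  assert (0 <= INR N * r) by (apply Rmult_le_pos; lra).
  pose proof (delay_v_ratio_upper N t ltac:(unfold t; lra)).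
  pose proof (delay_v_ratio_lower t ltac:(unfold t; lra)) as Hlow; fold m in Hlow.
  pose proof (v_pos t ltac:(unfold t; lra)).
  assert (Hm2 : 0 < m ^ 2) by (apply pow_lt; lra).
  assert (m ^ 2 * (exp 1 * p * r) ^ N >= 2)
    by (apply (Rmult_ge_compat_l (m ^ 2)) in HN; [field_simplify in HN|]; lra).
  nra.
Qed.

End DelayInequality.

(* Roots of [e l^2 - l - 1], the characteristic polynomial of [e y'' - y' - y]. *)
Definition char_root_pos (e : R) : R := (1 + sqrt (1 + 4 * e)) / (2 * e).
Definition char_root_neg (e : R) : R := (1 - sqrt (1 + 4 * e)) / (2 * e).

Lemma sqrt_1_add_4mul_bounds e : 0 < e ->
  sqrt (1 + 4 * e) * sqrt (1 + 4 * e) = 1 + 4 * e /\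
  1 <= sqrt (1 + 4 * e) <= 1 + 2 * e.
Proof.
  intros He. pose proof (sqrt_sqrt (1 + 4 * e) ltac:(lra)).
  pose proof (sqrt_pos (1 + 4 * e)). repeat split; nra.
Qed.

Lemma char_root_pos_gt0 e : 0 < e -> 0 < char_root_pos e.
Proof.
  intros He. pose proof (sqrt_pos (1 + 4 * e)).
  unfold char_root_pos. apply Rdiv_lt_0_compat; lra.
Qed.

Lemma char_roots_sum e : 0 < e -> e * (char_root_pos e + char_root_neg e) = 1.
Proof. intros He. unfold char_root_pos, char_root_neg. field. lra. Qed.

Lemma char_roots_prod e : 0 < e -> e * char_root_pos e * char_root_neg e = -1.
Proof.
  intros He. destruct (sqrt_1_add_4mul_bounds e He) as [Hsq _].
  unfold char_root_pos, char_root_neg.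
  replace (e * ((1 + sqrt (1 + 4 * e)) / (2 * e)) * ((1 - sqrt (1 + 4 * e)) / (2 * e)))
    with ((1 - sqrt (1 + 4 * e) * sqrt (1 + 4 * e)) / (4 * e)) by (field; lra).
  rewrite Hsq. field. lra.
Qed.

Lemma char_root_pos_ge_inv e : 0 < e -> / e <= char_root_pos e.
Proof.
  intros He. destruct (sqrt_1_add_4mul_bounds e He) as [_ [Hge _]].
  unfold char_root_pos. apply (Rmult_le_reg_r (2 * e)); [lra|].
  field_simplify; lra.
Qed.

Lemma inv_mul_char_root_pos_ge e : 0 < e -> 1 - e <= / (e * char_root_pos e).
Proof.
  intros He. destruct (sqrt_1_add_4mul_bounds e He) as [_ [Hge Hle]].
  replace (/ (e * char_root_pos e)) with (2 / (1 + sqrt (1 + 4 * e)))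
    by (unfold char_root_pos; field; lra).
  apply (Rmult_le_reg_r (1 + sqrt (1 + 4 * e))); [lra|].
  field_simplify; nra.
Qed.

Lemma char_root_neg_le e : 0 < e -> char_root_neg e <= e - 1.
Proof.
  intros He. destruct (sqrt_1_add_4mul_bounds e He) as [Hsq [Hge _]].
  assert (Hsqrt : 1 + 2 * e - 2 * e * e <= sqrt (1 + 4 * e)).
  { destruct (Rle_lt_dec (1 + 2 * e - 2 * e * e) 0); [lra|].
    assert (e < 2) by nra.
    assert (0 <= e * e * e * (2 - e)) by (apply Rmult_le_pos; [|lra]; apply Rmult_le_pos; nra).
    apply Rsqr_incr_0_var; [unfold Rsqr; nra | lra]. }
  unfold char_root_neg. apply (Rmult_le_reg_r (2 * e)); [lra|].
  field_simplify; nra.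
Qed.

Lemma one_sub_exp_char_root_pos_ge e tau : 0 < e -> 0 < tau ->
  1 - e / tau <= 1 - exp (- char_root_pos e * tau).
Proof.
  intros He Htau. pose proof (char_root_pos_ge_inv e He).
  assert (0 < tau / e) by (apply Rdiv_lt_0_compat; lra).
  assert (Hexp : exp (- char_root_pos e * tau) * (1 + tau / e) <= 1).
  { replace 1 with (exp (- (tau / e)) * exp (tau / e)) at 2
      by (rewrite <- exp_plus, <- exp_0; f_equal; ring).
    apply Rmult_le_compat; [left; apply exp_pos | lra | | apply exp_ineq1_le].
    apply exp_le_exp. unfold Rdiv. assert (/ e * tau <= char_root_pos e * tau) by
      (apply Rmult_le_compat_r; lra). lra. }
  assert (exp (- char_root_pos e * tau) <= e / tau); [|lra].
  pose proof (exp_pos (- char_root_pos e * tau)).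
  apply (Rmult_le_reg_r (tau / e)); [lra|].
  replace (e / tau * (tau / e)) with 1 by (field; lra). nra.
Qed.

Lemma exp_char_root_neg_ge e s : 0 < e -> 0 <= s ->
  exp s * (1 - e * s) <= exp (- char_root_neg e * s).
Proof.
  intros He Hs. pose proof (char_root_neg_le e He).
  assert (exp s * exp (- (e * s)) <= exp (- char_root_neg e * s)).
  { rewrite <- exp_plus. apply exp_le_exp. nra. }
  pose proof (exp_ineq1_le (- (e * s))). pose proof (exp_pos s). nra.
Qed.

(* [exp 1 * p * (h - tau)] for the decay rate [p] that the comparison argument
   below extracts from [e y'' - y' - y >= A y(t - h)]. *)
Definition delay_gain (e A h tau : R) : R :=
  exp 1 * (A * (1 - exp (- char_root_pos e * tau)) / (e * char_root_pos e)
           * exp (- char_root_neg e * (h - tau))) * (h - tau).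

(* The gain tends to [A h exp (h + 1)] as [e -> 0] and [tau -> 0]; each of its five
   factors is kept above [1 - d] times its limit. *)
Lemma delay_gain_ge (A h tau e d : R) : 0 < A -> 0 < h -> 0 < e -> 0 < tau ->
  0 <= d < 1 -> e / tau <= d -> e <= d -> tau + e * h <= d -> tau <= d * h ->
  A * h * exp (h + 1) * (1 - d) ^ 5 <= delay_gain e ((1 - d) * A) h tau.
Proof.
  intros HA Hh He Htau Hd Het Hed Htauh Htaud.
  assert (Htau_h : tau < h) by (assert (0 < (1 - d) * h) by (apply Rmult_lt_0_compat; lra); lra).
  set (a := 1 - d).
  set (X1 := 1 - exp (- char_root_pos e * tau)).
  set (X2 := / (e * char_root_pos e)).
  set (X3 := exp (- char_root_neg e * (h - tau))).
  assert (F1 : a <= X1)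
    by (pose proof (one_sub_exp_char_root_pos_ge e tau He Htau); unfold a, X1; lra).
  assert (F2 : a <= X2) by (pose proof (inv_mul_char_root_pos_ge e He); unfold a, X2; lra).
  assert (F3 : a * exp h <= X3).
  { pose proof (exp_char_root_neg_ge e (h - tau) He ltac:(lra)) as Hneg.
    replace (exp (h - tau)) with (exp h * exp (- tau)) in Hneg
      by (rewrite <- exp_plus; f_equal; ring).
    pose proof (exp_ineq1_le (- tau)). pose proof (exp_pos h).
    assert (1 - e * h <= 1 - e * (h - tau)) by nra.
    assert ((1 - tau) * (1 - e * h) <= exp (- tau) * (1 - e * (h - tau)))
      by (apply Rmult_le_compat; nra).
    assert (a <= exp (- tau) * (1 - e * (h - tau))) by (unfold a; nra).
    unfold X3; nra. }
  assert (F4 : a * h <= h - tau) by (unfold a; nra).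
  assert (Hprod : a * a * a * (a * exp h) * (a * h) <= a * X1 * X2 * X3 * (h - tau)).
  { pose proof (exp_pos h).
    repeat apply Rmult_le_compat; repeat apply Rmult_le_pos; unfold a in *; lra. }
  unfold delay_gain; fold X1 X3.
  replace (exp 1 * (a * A * X1 / (e * char_root_pos e) * X3) * (h - tau))
    with (exp 1 * A * (a * X1 * X2 * X3 * (h - tau)))
    by (unfold X2; field; pose proof (char_root_pos_gt0 e He); nra).
  replace (A * h * exp (h + 1) * a ^ 5)
    with (exp 1 * A * (a * a * a * (a * exp h) * (a * h))) by (rewrite exp_plus; ring).
  apply Rmult_le_compat_l; [|exact Hprod].
  pose proof (exp_pos 1). nra.
Qed.

Lemma delay_gain_gt1 (A h : R) : 0 < A -> 0 < h -> 1 < A * h * exp (h + 1) ->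
  exists r tau e0, 0 < r < 1 /\ 0 < tau < h /\ 0 < e0 /\
    forall e, 0 < e < e0 -> 1 < delay_gain e (r * A) h tau.
Proof.
  intros HA Hh Hk.
  set (k := A * h * exp (h + 1)) in *.
  set (d := (1 - / k) / 10).
  assert (Hd : 0 < d < 1 / 10).
  { assert (0 < / k < 1).
    { split; [apply Rinv_0_lt_compat; lra|].
      rewrite <- Rinv_1. apply Rinv_lt_contravar; lra. }
    unfold d; lra. }
  set (tau := d * h / (2 * (h + 1))).
  assert (Htau : 0 < tau /\ tau <= d / 2 /\ tau <= d * h / 2).
  { unfold tau; repeat split.
    - apply Rdiv_lt_0_compat; nra.
    - apply (Rmult_le_reg_r (2 * (h + 1))); [lra|]. field_simplify; nra.
    - apply (Rmult_le_reg_r (2 * (h + 1))); [lra|]. field_simplify; nra. }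
  exists (1 - d), tau, (Rmin (d * tau) (d / (2 * h))).
  split; [lra|]. split; [nra|]. split.
  { apply Rmin_pos; [nra | apply Rdiv_lt_0_compat; lra]. }
  intros e [He He0].
  pose proof (Rmin_l (d * tau) (d / (2 * h))).
  pose proof (Rmin_r (d * tau) (d / (2 * h))).
  assert (Het : e / tau <= d)
    by (apply (Rmult_le_reg_r tau); [lra|]; field_simplify; lra).
  assert (Heh : e * h <= d / 2).
  { apply (Rmult_le_reg_r (/ h)); [apply Rinv_0_lt_compat; lra|].
    replace (e * h * / h) with e by (field; lra).
    replace (d / 2 * / h) with (d / (2 * h)) by (field; lra). lra. }
  pose proof (delay_gain_ge A h tau e d HA Hh He ltac:(lra) ltac:(lra) Het ltac:(nra)
                ltac:(lra) ltac:(nra)) as Hge; fold k in Hge.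
  pose proof (bernoulli_ineq (- d) 5 ltac:(lra)) as Hbern.
  replace (1 + - d) with (1 - d) in Hbern by ring. simpl INR in Hbern.
  assert (Hkd : 1 < k * (1 - 5 * d)) by (unfold d; field_simplify; lra).
  assert (k * (1 - 5 * d) <= k * (1 - d) ^ 5) by (apply Rmult_le_compat_l; lra).
  lra.
Qed.

Section SecondOrderComparison.

Variables (e A h tau T B : R) (y y1 y2 : R -> R).
Hypothesis e_pos : 0 < e.
Hypothesis A_pos : 0 < A.
Hypothesis tau_range : 0 < tau < h.
Hypothesis gain_gt1 : 1 < delay_gain e A h tau.
Hypothesis y_derive : forall t, is_derive y t (y1 t).
Hypothesis y1_derive : forall t, is_derive y1 t (y2 t).
Hypothesis y_nonneg : forall t, T - h <= t -> 0 <= y t.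
Hypothesis y_super : forall t, T <= t -> A * y (t - h) <= e * y2 t - y1 t - y t.
Hypothesis y_bounded : forall t, Rabs (y t) <= B.
Hypothesis y_not_eventually_0 : forall t1, exists t, t1 <= t /\ y t <> 0.

Let lp := char_root_pos e.
Let lm := char_root_neg e.
Let u (s : R) : R := y1 s - lm * y s.

Let lp_pos : 0 < lp.
Proof. exact (char_root_pos_gt0 e e_pos). Qed.

Let lm_neg : lm < 0.
Proof.
  pose proof (char_roots_prod e e_pos). fold lp lm in H.
  pose proof (Rmult_lt_0_compat _ _ e_pos lp_pos). nra.
Qed.

(* [e y'' - y' - y = e (D - lp) (D - lm) y = e (u' - lp u)]. *)
Lemma comparison_is_derive_weighted_u s :
  is_derive (fun s => exp (- lp * s) * u s) s
    (exp (- lp * s) * (e * y2 s - y1 s - y s) / e).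
Proof.
  replace (exp (- lp * s) * (e * y2 s - y1 s - y s) / e)
    with (- lp * exp (- lp * s) * u s + exp (- lp * s) * (y2 s - lm * y1 s)).
  - apply (Derive.is_derive_mult (fun s => exp (- lp * s)) u);
      [apply is_derive_exp_scal|].
    apply is_derive_Rminus; [apply y1_derive | apply is_derive_Rscal, y_derive].
  - pose proof (char_roots_sum e e_pos) as Hsum. pose proof (char_roots_prod e e_pos) as Hprod.
    fold lp lm in Hsum, Hprod. unfold u.
    apply (Rmult_eq_reg_l e); [|lra].
    replace (e * (exp (- lp * s) * (e * y2 s - y1 s - y s) / e))
      with (exp (- lp * s) * (e * y2 s - (e * (lp + lm)) * y1 s + (e * lp * lm) * y s))
      by (rewrite Hsum, Hprod; field; lra).
    ring.
Qed.

Lemma comparison_weighted_u_nondecr a b : T <= a -> a <= b ->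
  exp (- lp * a) * u a <= exp (- lp * b) * u b.
Proof.
  intros Ha Hab.
  apply (nondecreasing_of_derive_nonneg (fun s => exp (- lp * s) * u s)
           (fun s => exp (- lp * s) * (e * y2 s - y1 s - y s) / e) a b Hab);
    [intros t _; apply comparison_is_derive_weighted_u|].
  intros t Ht. pose proof (y_super t ltac:(lra)). pose proof (y_nonneg (t - h) ltac:(lra)).
  pose proof (exp_pos (- lp * t)).
  apply Rdiv_le_0_compat; [|lra]. apply Rmult_le_pos; nra.
Qed.

(* Otherwise [u] grows linearly, which forces [y' >= 1] eventually. *)
Lemma comparison_u_nonpos t : T <= t -> u t <= 0.
Proof.
  intros Ht. destruct (Rle_lt_dec (u t) 0) as [|HU]; [assumption|exfalso].
  assert (Hgrow : forall s, t <= s -> u t * lp * (s - t) <= u s).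
  { intros s Hs. pose proof (comparison_weighted_u_nondecr t s Ht Hs).
    assert (exp (lp * (s - t)) * u t <= u s).
    { apply (Rmult_le_reg_l (exp (- lp * s))); [apply exp_pos|].
      replace (exp (- lp * s) * (exp (lp * (s - t)) * u t)) with (exp (- lp * t) * u t)
        by (rewrite <- Rmult_assoc, <- exp_plus; f_equal; f_equal; ring).
      lra. }
    pose proof (exp_ineq1_le (lp * (s - t))). nra. }
  set (s1 := t + (1 - lm * B) / (u t * lp)).
  assert (HB : 0 <= B) by (pose proof (y_bounded 0); pose proof (Rabs_pos (y 0)); lra).
  assert (Hs1 : u t * lp * (s1 - t) = 1 - lm * B) by (unfold s1; field; nra).
  assert (Hts1 : t <= s1).
  { unfold s1. assert (0 <= (1 - lm * B) / (u t * lp)); [|lra].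
    apply Rdiv_le_0_compat; nra. }
  assert (Hy1 : forall s, s1 <= s -> 1 <= y1 s).
  { intros s Hs. pose proof (Hgrow s ltac:(lra)).
    pose proof (y_bounded s) as Hb. apply Rabs_le_between in Hb.
    assert (u t * lp * (s1 - t) <= u t * lp * (s - t))
      by (apply Rmult_le_compat_l; nra).
    assert (lm * B <= lm * y s) by nra.
    unfold u in *. lra. }
  assert (y s1 - s1 <= y (s1 + 2 * B + 1) - (s1 + 2 * B + 1)).
  { apply (nondecreasing_of_derive_nonneg (fun s => y s - s) (fun s => y1 s - 1));
      [lra| |].
    - intros s _. apply is_derive_Rminus; [apply y_derive | auto_derive; auto].
    - intros s Hs. pose proof (Hy1 s ltac:(lra)). lra. }
  pose proof (y_bounded s1) as Hb1. apply Rabs_le_between in Hb1.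
  pose proof (y_bounded (s1 + 2 * B + 1)) as Hb2. apply Rabs_le_between in Hb2.
  lra.
Qed.

Lemma comparison_y_nonincr a b : T <= a -> a <= b -> y b <= y a.
Proof.
  intros Ha Hab. apply (nonincreasing_of_derive_nonpos y y1 a b Hab (fun t _ => y_derive t)).
  intros t Ht. pose proof (comparison_u_nonpos t ltac:(lra)).
  pose proof (y_nonneg t ltac:(lra)). unfold u in *. nra.
Qed.

Lemma comparison_y_pos t : T <= t -> 0 < y t.
Proof.
  intros Ht. destruct (Rle_lt_dec (y t) 0) as [Hle|]; [exfalso|assumption].
  destruct (y_not_eventually_0 t) as [t' [Ht' Hne]]. apply Hne.
  pose proof (comparison_y_nonincr t t' Ht Ht'). pose proof (y_nonneg t' ltac:(lra)). lra.
Qed.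

Let Q := A * (1 - exp (- lp * tau)) / (e * lp).

(* Integrate [u' - lp u >= A y(t + tau - h) / e] over [t, t + tau], using [u <= 0]. *)
Lemma comparison_u_le_delayed t : T + h <= t -> u t <= - Q * y (t + tau - h).
Proof.
  intros Ht. set (c := A * y (t + tau - h) / e).
  assert (Hc : 0 <= c).
  { pose proof (y_nonneg (t + tau - h) ltac:(lra)).
    apply Rdiv_le_0_compat; [apply Rmult_le_pos|]; lra. }
  assert (Hx : exp (- lp * t) * u t + c * exp (- lp * t) / lp <=
               exp (- lp * (t + tau)) * u (t + tau) + c * exp (- lp * (t + tau)) / lp).
  { apply (nondecreasing_of_derive_nonneg
      (fun s => exp (- lp * s) * u s + c * exp (- lp * s) / lp)
      (fun s => exp (- lp * s) * ((e * y2 s - y1 s - y s) / e - c))); [lra| |].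
    - intros s _.
      replace (exp (- lp * s) * ((e * y2 s - y1 s - y s) / e - c))
        with (exp (- lp * s) * (e * y2 s - y1 s - y s) / e + c * (- lp * exp (- lp * s)) / lp)
        by (field; lra).
      apply is_derive_Rplus; [apply comparison_is_derive_weighted_u|].
      auto_derive; [auto | field; lra].
    - intros s Hs.
      assert (A * y (t + tau - h) <= A * y (s - h))
        by (apply Rmult_le_compat_l; [lra | apply comparison_y_nonincr; lra]).
      pose proof (y_super s ltac:(lra)).
      assert (c <= (e * y2 s - y1 s - y s) / e)
        by (unfold c, Rdiv; apply Rmult_le_compat_r; [left; apply Rinv_0_lt_compat|]; lra).
      apply Rmult_le_pos; [left; apply exp_pos | lra]. }
  pose proof (comparison_u_nonpos (t + tau) ltac:(lra)).
  replace (exp (- lp * (t + tau))) with (exp (- lp * t) * exp (- lp * tau)) in Hx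
    by (rewrite <- exp_plus; f_equal; ring).
  pose proof (exp_pos (- lp * t)). pose proof (exp_pos (- lp * tau)).
  assert (Hneg : exp (- lp * t) * (u t + c / lp * (1 - exp (- lp * tau))) <= 0).
  { assert (exp (- lp * t) * exp (- lp * tau) * u (t + tau) <= 0)
      by (apply Rmult_le_0_l; [left; apply Rmult_lt_0_compat|]; lra).
    replace (exp (- lp * t) * (u t + c / lp * (1 - exp (- lp * tau))))
      with (exp (- lp * t) * u t + c * exp (- lp * t) / lp
            - c * (exp (- lp * t) * exp (- lp * tau)) / lp) by (field; lra).
    lra. }
  replace (- Q * y (t + tau - h)) with (- (c / lp * (1 - exp (- lp * tau))))
    by (unfold Q, c; field; lra).
  assert (u t + c / lp * (1 - exp (- lp * tau)) <= 0); [|lra].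
  destruct (Rle_lt_dec (u t + c / lp * (1 - exp (- lp * tau))) 0) as [|Hpos]; [assumption|].
  pose proof (Rmult_lt_0_compat _ _ (exp_pos (- lp * t)) Hpos). lra.
Qed.

(* [v = exp(-lm t) y] satisfies [v' = exp(-lm t) u <= - Q exp(-lm (h - tau)) v(t - (h - tau))]. *)
Theorem second_order_delay_inequality_no_nonneg_solution : False.
Proof.
  set (r := h - tau).
  set (p := Q * exp (- lm * r)).
  assert (Hgain : 1 < exp 1 * p * r) by exact gain_gt1.
  assert (Hp : 0 < p).
  { assert (0 < exp 1 * r) by (apply Rmult_lt_0_compat; [apply exp_pos | unfold r; lra]).
    nra. }
  apply (delay_inequality_no_positive_solution (fun s => exp (- lm * s) * y s)
           (fun s => exp (- lm * s) * u s) p r (T + h)); [unfold r; lra | lra | lra | | | |].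
  - intros s _.
    replace (exp (- lm * s) * u s)
      with (- lm * exp (- lm * s) * y s + exp (- lm * s) * y1 s) by (unfold u; ring).
    apply (Derive.is_derive_mult (fun s => exp (- lm * s)) y);
      [apply is_derive_exp_scal | apply y_derive].
  - intros s Hs. apply Rmult_lt_0_compat; [apply exp_pos | apply comparison_y_pos; unfold r in Hs; lra].
  - intros s Hs. apply Rmult_le_0_l; [left; apply exp_pos | apply comparison_u_nonpos; unfold r in Hs; lra].
  - intros t Ht. pose proof (comparison_u_le_delayed t Ht) as Hu.
    replace (t + tau - h) with (t - r) in Hu by (unfold r; ring).
    replace (exp (- lm * t)) with (exp (- lm * r) * exp (- lm * (t - r)))
      by (rewrite <- exp_plus; f_equal; ring).
    pose proof (exp_pos (- lm * r)). pose proof (exp_pos (- lm * (t - r))).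
    unfold p.
    replace (- (Q * exp (- lm * r)) * (exp (- lm * (t - r)) * y (t - r)))
      with (exp (- lm * r) * exp (- lm * (t - r)) * (- Q * y (t - r))) by ring.
    apply Rmult_le_compat_l; [left; apply Rmult_lt_0_compat|]; lra.
Qed.

End SecondOrderComparison.

Lemma ex_derive_near (f : R -> R) x (eps : posreal) : ex_derive f x ->
  exists d : posreal, forall y, Rabs (y - x) < d -> Rabs (f y - f x) < eps.
Proof.
  intros Hd.
  assert (Hc : continuity_pt f x)
    by apply continuity_pt_filterlim, (ex_derive_continuous (V := R_NormedModule)), Hd.
  exact (proj1 (continuity_pt_locally f x) Hc eps).
Qed.

Lemma Derive_eq0_of_tail_const (f : R -> R) c S t :
  S < t -> (forall s, S < s -> f s = c) -> Derive f t = 0.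
Proof.
  intros Ht Hc. rewrite (Derive_ext_loc f (fun _ => c)); [apply Derive_const|].
  apply (filter_imp (fun s => S < s)); [intros s Hs; now apply Hc | exact (open_gt S t Ht)].
Qed.

Lemma sp_solution_delay_eq_of_tail_const g h eps x K S :
  sp_solution g h eps x -> (forall t, S < t -> x t = K) ->
  forall t, S < t -> g (x (t - h)) = K.
Proof.
  intros Hsol Htail t Ht. destruct (Hsol t) as [_ [_ Heq]].
  assert (Hdx : forall s, S < s -> Derive x s = 0)
    by (intros s Hs; exact (Derive_eq0_of_tail_const x K S s Hs Htail)).
  rewrite (Hdx t Ht), Htail in Heq by exact Ht.
  assert (Hd2 : Derive_n x 2 t = 0) by exact (Derive_eq0_of_tail_const (Derive x) 0 S t Ht Hdx).
  rewrite Hd2 in Heq. lra.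
Qed.

(* Let [S] be the last time where [x <> K]. On [(S, +oo)] the equation reduces to
   [g(x(t - h)) = K]; as [K] is isolated in [g^-1(K)] and [x(S) = K] by continuity,
   [x = K] also slightly before [S]. *)
Lemma sp_solution_eq_of_eventually_eq (g : R -> R) (h K eps : R) (x : R -> R) :
  0 < h -> (exists del, 0 < del /\ forall w, 0 < Rabs w < del -> g (K + w) <> K) ->
  sp_solution g h eps x -> (exists t1, forall t, t1 <= t -> x t = K) ->
  forall t, x t = K.
Proof.
  intros Hh [del [Hdel Hiso]] Hsol [t1 Ht1] t0.
  apply NNPP; intros Hne.
  set (E := fun s => x s <> K).
  assert (Hbd : bound E).
  { exists t1. intros s Hs. destruct (Rle_lt_dec s t1); [lra|].
    exfalso. apply Hs, Ht1. lra. }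
  destruct (completeness E Hbd (ex_intro _ t0 Hne)) as [S [Hub Hleast]].
  assert (Htail : forall t, S < t -> x t = K).
  { intros t Ht. apply NNPP; intros Hx. pose proof (Hub t Hx). lra. }
  assert (HdS : ex_derive x S) by apply (Hsol S).
  assert (HxS : x S = K).
  { apply NNPP; intros Hx.
    destruct (ex_derive_near x S (mkposreal _ (Rabs_pos_lt (x S - K) ltac:(lra))) HdS)
      as [d Hd].
    specialize (Hd (S + d / 2)). simpl in Hd.
    rewrite Htail in Hd by (pose proof (cond_pos d); lra).
    replace (Rabs (K - x S)) with (Rabs (x S - K)) in Hd by apply Rabs_minus_sym.
    apply (Rlt_irrefl (Rabs (x S - K))), Hd.
    replace (S + d / 2 - S) with (d / 2) by field.
    pose proof (cond_pos d). rewrite Rabs_right; lra. }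
  destruct (ex_derive_near x S (mkposreal del Hdel) HdS) as [d Hd].
  pose proof (cond_pos d).
  set (d' := Rmin d h).
  assert (Hd' : 0 < d') by (apply Rmin_pos; lra).
  assert (Hbefore : forall s, S - d' < s <= S -> x s = K).
  { intros s Hs. apply NNPP; intros Hx.
    assert (Hnear : Rabs (s - S) < d)
      by (pose proof (Rmin_l d h); rewrite Rabs_left1 by lra; unfold d' in Hs; lra).
    specialize (Hd s Hnear). rewrite HxS in Hd. simpl in Hd.
    apply (Hiso (x s - K)); [split; [apply Rabs_pos_lt; lra | exact Hd]|].
    replace (K + (x s - K)) with (x (s + h - h)) by (replace (s + h - h) with s by ring; ring).
    apply (sp_solution_delay_eq_of_tail_const g h eps x K S Hsol Htail).
    pose proof (Rmin_r d h). unfold d' in Hs. lra. }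
  assert (Hub' : is_upper_bound E (S - d')).
  { intros s Hs. apply Rnot_lt_le; intros Hlt. apply Hs.
    destruct (Rle_lt_dec s S); [apply Hbefore; lra | apply Htail; lra]. }
  pose proof (Hleast _ Hub'). lra.
Qed.

Lemma mul_incr_le_of_is_derive_lt (g : R -> R) K a A : is_derive g K a -> a < - A ->
  exists del, 0 < del /\ forall w, Rabs w < del -> w * (g (K + w) - g K) <= - A * (w * w).
Proof.
  intros Hd Ha. apply is_derive_Reals in Hd.
  destruct (Hd (- A - a) ltac:(lra)) as [del Hdel].
  exists del. split; [apply cond_pos|]. intros w Hw.
  destruct (Req_dec w 0) as [->|Hw0]; [lra|].
  specialize (Hdel w Hw0 Hw). apply Rabs_lt_between in Hdel.
  assert (Hww : 0 < w * w) by (destruct (Rtotal_order w 0) as [|[|]]; nra).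
  replace (w * (g (K + w) - g K)) with ((g (K + w) - g K) / w * (w * w)) by (field; auto).
  apply Rmult_le_compat_r; lra.
Qed.

Lemma sp_solution_not_eventually_eq (g : R -> R) (h K eps A : R) (x : R -> R) :
  0 < h -> 0 < A ->
  (exists del, 0 < del /\ forall w, Rabs w < del -> w * (g (K + w) - K) <= - A * (w * w)) ->
  sp_solution g h eps x -> (exists t1 t2, x t1 <> x t2) ->
  forall t0, exists t, t0 <= t /\ x t <> K.
Proof.
  intros Hh HA [del [Hdel Hloc]] Hsol [t1 [t2 Hnc]] t0.
  apply NNPP; intros Hev. apply Hnc.
  assert (Hiso : forall w, 0 < Rabs w < del -> g (K + w) <> K).
  { intros w [Hw0 Hw] HgKw. specialize (Hloc w Hw). rewrite HgKw in Hloc.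
    assert (0 < w * w) by (apply Rsqr_pos_lt; intros ->; rewrite Rabs_R0 in Hw0; lra).
    nra. }
  assert (Htail : exists t1, forall t, t1 <= t -> x t = K).
  { exists t0. intros t Ht. apply NNPP; intros Hne. apply Hev. now exists t. }
  pose proof (sp_solution_eq_of_eventually_eq g h K eps x Hh (ex_intro _ del (conj Hdel Hiso))
                Hsol Htail) as Hconst.
  now rewrite !Hconst.
Qed.

Lemma signed_incr_le (g : R -> R) K A sgn w : sgn * sgn = 1 -> g K = K ->
  w * (g (K + w) - K) <= - A * (w * w) -> 0 <= sgn * w ->
  sgn * (g (K + w) - K) <= - A * (sgn * w).
Proof.
  intros Hsq HgK Hloc [Hq|Hq].
  - assert ((sgn * w) * (A * (sgn * w) + sgn * (g (K + w) - K)) <= 0) by nra.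
    nra.
  - assert (w = 0) as -> by nra. rewrite Rplus_0_r, HgK. lra.
Qed.

(* [y = sgn (x - K)] would be a bounded nonnegative solution of the comparison
   inequality, with [A] below [- g'(K)]. *)
Lemma sp_solution_not_one_sided (g : R -> R) (h K eps A tau sgn z : R) (x : R -> R) :
  0 < h -> 0 < eps -> (sgn = 1 \/ sgn = -1) -> 0 < A -> 0 < tau < h -> g K = K ->
  1 < delay_gain (eps ^ 2) A h tau ->
  (exists del, 0 < del /\ forall w, Rabs w < del -> w * (g (K + w) - K) <= - A * (w * w)) ->
  sp_solution g h eps x -> (exists B, forall t, Rabs (x t) <= B) ->
  (exists t1 t2, x t1 <> x t2) -> is_lim x p_infty (Finite K) ->
  ~ (forall t, z <= t -> 0 <= sgn * (x t - K)).
Proof.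
  intros Hh Heps Hsgn HA Htau HgK Hgain Hlocal Hsol [Bx HBx] Hnc Hlim Hsign.
  pose proof (sp_solution_not_eventually_eq g h K eps A x Hh HA Hlocal Hsol Hnc) as Hnot.
  destruct Hlocal as [del [Hdel Hloc]].
  assert (Hsq : sgn * sgn = 1) by (destruct Hsgn; subst; ring).
  assert (Habs : Rabs sgn = 1)
    by (destruct Hsgn; subst; unfold Rabs; destruct (Rcase_abs _); lra).
  destruct (proj2 (is_lim_spec x p_infty K) Hlim (mkposreal del Hdel)) as [M HM].
  set (T := Rmax (z + h) (M + h + 1)).
  pose proof (Rmax_l (z + h) (M + h + 1)). pose proof (Rmax_r (z + h) (M + h + 1)).
  assert (Hdx : forall t, is_derive x t (Derive x t)) by (intros t; apply Derive_correct, Hsol).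
  apply (second_order_delay_inequality_no_nonneg_solution (eps ^ 2) A h tau T (Bx + Rabs K)
    (fun t => sgn * (x t - K)) (fun t => sgn * Derive x t) (fun t => sgn * Derive (Derive x) t));
    [apply pow_lt; lra | assumption | assumption | assumption | | | | | | ].
  - intros t. apply is_derive_Rscal.
    replace (Derive x t) with (Derive x t - 0) by ring.
    apply is_derive_Rminus; [apply Hdx | auto_derive; auto].
  - intros t. apply is_derive_Rscal, Derive_correct, Hsol.
  - intros t Ht. apply Hsign. unfold T in Ht. lra.
  - intros t Ht. destruct (Hsol t) as [_ [_ Heq]].
    change (Derive_n x 2 t) with (Derive (Derive x) t) in Heq.
    set (w := x (t - h) - K).
    assert (Hq : 0 <= sgn * w) by (apply Hsign; unfold T in Ht; lra).
    assert (Hw : Rabs w < del) by (apply HM; unfold T in Ht; lra).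
    pose proof (signed_incr_le g K A sgn w Hsq HgK (Hloc w Hw) Hq) as Hsigned.
    replace (K + w) with (x (t - h)) in Hsigned by (unfold w; ring).
    pose proof (f_equal (Rmult sgn) Heq) as Hs. rewrite Rmult_0_r in Hs.
    lra.
  - intros t. rewrite Rabs_mult, Habs, Rmult_1_l.
    pose proof (Rabs_triang (x t) (- K)) as Htri. rewrite Rabs_Ropp in Htri.
    specialize (HBx t). unfold Rminus. lra.
  - intros t1. destruct (Hnot t1) as [t [Ht Hne]]. exists t. split; [assumption|].
    intros Hzero. apply Rmult_integral in Hzero. destruct Hzero; [nra | lra].
Qed.

Theorem lemma16 (g : R -> R) (h K : R) :
  hyp_H g h K ->
  (exists B, forall u, Rabs (g u) <= B) ->
  Derive g K * h * exp (h + 1) < -1 ->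
  exists eps0, 0 < eps0 /\
    forall eps, 0 < eps < eps0 ->
    forall x : R -> R,
      sp_solution g h eps x ->
      (exists B, forall t, Rabs (x t) <= B) ->
      (exists t1 t2, x t1 <> x t2) ->
      is_lim x p_infty (Finite K) ->
      forall z, (exists t, z <= t /\ x t - K > 0) /\
                (exists t, z <= t /\ x t - K < 0).
Proof.
  intros (Hh & HK & _ & Hfix & _ & _ & HC1 & _) _ Hcond.
  assert (HgK : g K = K) by (apply (Hfix K); [lra | now right]).
  assert (Ha : Derive g K < 0)
    by (destruct (Rlt_le_dec (Derive g K) 0) as [|Hge]; [assumption|];
        pose proof (Rmult_le_pos _ _ (Rmult_le_pos _ _ Hge (Rlt_le _ _ Hh)) (Rlt_le _ _ (exp_pos (h + 1))));
        lra).
  destruct (delay_gain_gt1 (- Derive g K) h ltac:(lra) Hh ltac:(lra))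
    as (r & tau & e0 & Hr & Htau & He0 & Hgain).
  destruct (mul_incr_le_of_is_derive_lt g K (Derive g K) (r * - Derive g K)
              (Derive_correct g K (proj1 (HC1 K))) ltac:(nra)) as [del [Hdel Hloc]].
  rewrite HgK in Hloc.
  exists (Rmin 1 e0). split; [apply Rmin_pos; lra|].
  intros eps [Heps Heps0] x Hsol Hbd Hnc Hlim z.
  assert (He : eps ^ 2 < e0).
  { pose proof (Rmin_l 1 e0). pose proof (Rmin_r 1 e0).
    assert (eps * eps <= eps * 1) by (apply Rmult_le_compat_l; lra).
    simpl. lra. }
  assert (Hside : forall sgn, (sgn = 1 \/ sgn = -1) ->
                  ~ (forall t, z <= t -> 0 <= sgn * (x t - K))).
  { intros sgn Hsgn.
    apply (sp_solution_not_one_sided g h K eps (r * - Derive g K) tau sgn z x);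
      try assumption; [apply Rmult_lt_0_compat; lra | | now exists del].
    apply Hgain. split; [apply pow_lt|]; lra. }
  split; apply NNPP; intros Hn.
  - apply (Hside (-1) (or_intror eq_refl)). intros t Ht.
    destruct (Rle_lt_dec (x t - K) 0); [lra|]. exfalso. apply Hn. now exists t.
  - apply (Hside 1 (or_introl eq_refl)). intros t Ht.
    destruct (Rle_lt_dec 0 (x t - K)); [lra|]. exfalso. apply Hn. now exists t.
Qed.
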